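(* Let $r\ge4$ be even. For any $n\ge r-1$ and $A>0$, there exists $f\in C^r[-1,1]$ with $f\le0$ on $[-1,0]$ and $f\ge0$ on $[0,1]$, such that every algebraic polynomial $P_n$ of degree $\le n$ with $P_n\le0$ on $[-1,0]$, $P_n\ge0$ on $[0,1]$ and $P_n^{(i)}(0)=f^{(i)}(0)$ for $0\le i\le r-1$ obeys $$\|f-P_n\|>A\,\|f^{(r)}\|.$$
   Context: $\|\cdot\|$ is the sup norm on $[-1,1]$. *)

From Stdlib Require Import Reals Lra.
From Coquelicot Require Import Coquelicot.
Open Scope R_scope.

Definition Cr (r : nat) (f : R -> R) : Prop :=
  (forall (k : nat) (x : R), (k <= r)%nat -> ex_derive_n f k x) /\
  (forall x : R, continuous (Derive_n f r) x).

Definition supnorm (g : R -> R) : R :=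
  real (Lub_Rbar (fun y => exists x, -1 <= x <= 1 /\ y = Rabs (g x))).

Definition algpoly (n : nat) (a : nat -> R) : R -> R :=
  fun x => sum_f_R0 (fun k => a k * x ^ k) n.

Definition sign_change_at0 (g : R -> R) : Prop :=
  (forall x, -1 <= x <= 0 -> g x <= 0) /\ (forall x, 0 <= x <= 1 -> 0 <= g x).

From Stdlib Require Import Reals Lra Lia Factorial.
From Coquelicot Require Import Coquelicot.
From mathcomp Require all_boot all_order all_algebra Rstruct.
Open Scope R_scope.

(* Fix r >= 4 even and a small s > 0, and let g be the r-th iterated primitive,
   vanishing at 0, of c * clamp(2x/s, -1, 1) with c = 2^r r!/s.  Then
   f(x) = s^2 x^(r-3) - x^(r-1) + g(x) is odd, |f^(r)| <= c, and f >= 0 on [0,1]: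
   near 0 the first two terms have the right sign, and beyond s one has
   g(x) >= x^r/s.  A polynomial P with the (r-1)-jet of f at 0 is
   s^2 x^(r-3) - x^(r-1) + x^r Q(x), and its sign pattern at +-2s forces
   4s (Q(2s) - Q(-2s)) >= 3.  If ||f - P|| <= A ||f^(r)||, then |x^r Q(x)| <= (A+1) c
   on [-1,1], so Q is bounded by (A+1) c N^r at the nodes 1/(j+1), j < N = n+1-r,
   and Lagrange interpolation makes Q Lipschitz on [-1,1] with constant
   C (A+1) c N^r, where C depends only on N.  As c s = 2^r r!, this gives
   Q(2s) - Q(-2s) <= K with K independent of s, and s = 1/(2(K+1)) yields the
   contradiction 3 <= 4sK < 2. *)

Fixpoint psum (N : nat) (b : nat -> R) (x : R) : R :=
  match N with O => 0 | S N' => psum N' b x + b N' * x ^ N' end.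

Lemma algpoly_psum n a x : algpoly n a x = psum (S n) a x.
Proof.
induction n as [|n IH]; unfold algpoly in *; simpl in *; [ring|].
now rewrite IH.
Qed.

Lemma psum_ext N u w x :
  (forall j, (j < N)%nat -> u j = w j) -> psum N u x = psum N w x.
Proof.
induction N as [|N IH]; intro H; simpl; [reflexivity|].
rewrite IH by (intros; apply H; lia). rewrite H by lia. reflexivity.
Qed.

Lemma psum_plus N u w x :
  psum N (fun j => u j + w j) x = psum N u x + psum N w x.
Proof. induction N as [|N IH]; simpl; [ring|]. rewrite IH; ring. Qed.

Lemma psum_monomial N k v x : (k < N)%nat ->
  psum N (fun j => if j =? k then v else 0) x = v * x ^ k.
Proof.
induction N as [|N IH]; intro Hk; simpl; [lia|].
destruct (Nat.eqb_spec N k) as [->|Hne].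
- assert (Z : forall M, psum M (fun _ => 0) x = 0)
    by (induction M as [|M IHM]; simpl; [|rewrite IHM]; ring).
  rewrite (psum_ext _ _ (fun _ => 0)), Z by
    (intros j Hj; destruct (Nat.eqb_spec j k); [lia|reflexivity]).
  ring.
- rewrite IH by lia. ring.
Qed.

Lemma psum_split r N a x :
  psum (r + N) a x = psum r a x + x ^ r * psum N (fun i => a (i + r)%nat) x.
Proof.
induction N as [|N IH].
- rewrite Nat.add_0_r; simpl; ring.
- rewrite Nat.add_succ_r; simpl. rewrite IH, pow_add, (Nat.add_comm N r). ring.
Qed.

Lemma Derive_n_chain (f : R -> R) (F : nat -> R -> R) (r : nat) :
  (forall x, F O x = f x) ->
  (forall k x, (k < r)%nat -> is_derive (F k) x (F (S k) x)) ->
  forall k x, (k <= r)%nat -> Derive_n f k x = F k x /\ ex_derive_n f k x.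
Proof.
intros H0 HF k. induction k as [|k IH]; intros x Hk.
- split; [symmetry; apply H0|exact I].
- assert (E : forall y, Derive_n f k y = F k y) by (intro; apply IH; lia).
  simpl. split.
  + rewrite (Derive_ext _ _ x E). apply is_derive_unique, HF; lia.
  + apply (ex_derive_ext (F k)); [intro; symmetry; apply E|].
    eexists; apply HF; lia.
Qed.

Lemma Cr_chain (f : R -> R) (F : nat -> R -> R) (r : nat) :
  (forall x, F O x = f x) ->
  (forall k x, (k < r)%nat -> is_derive (F k) x (F (S k) x)) ->
  (forall x, continuous (F r) x) -> Cr r f.
Proof.
intros H0 HF Hc. split.
- intros k x Hk. apply (Derive_n_chain f F r H0 HF k x Hk).
- intro x. apply (continuous_ext (F r)); [|apply Hc].
  intro y. symmetry. apply (Derive_n_chain f F r H0 HF r y (le_n r)).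
Qed.

Fixpoint falling (j k : nat) : R :=
  match k with O => 1 | S k' => falling j k' * INR (j - k') end.

Lemma falling_lt j k : (j < k)%nat -> falling j k = 0.
Proof.
induction k as [|k IH]; intro H; [lia|]. simpl.
destruct (Nat.eq_dec j k) as [->|Hne].
- rewrite Nat.sub_diag; simpl; ring.
- rewrite IH by lia; ring.
Qed.

Lemma falling_pos j k : (k <= j)%nat -> 0 < falling j k.
Proof.
induction k as [|k IH]; intro H; simpl; [lra|].
apply Rmult_lt_0_compat; [apply IH; lia|apply lt_0_INR; lia].
Qed.

(* The truncated exponent [N' - k] is harmless: [falling N' k = 0] when [N' < k]. *)
Fixpoint psum_deriv (N : nat) (a : nat -> R) (k : nat) (x : R) : R :=
  match N with
  | O => 0
  | S N' => psum_deriv N' a k x + a N' * falling N' k * x ^ (N' - k)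
  end.

Lemma psum_deriv_0 N a x : psum_deriv N a 0 x = psum N a x.
Proof.
induction N as [|N IH]; simpl; [reflexivity|].
rewrite IH, Nat.sub_0_r; ring.
Qed.

Lemma is_derive_psum_deriv N a k x :
  is_derive (psum_deriv N a k) x (psum_deriv N a (S k) x).
Proof.
induction N as [|N IH]; simpl.
- apply (is_derive_const 0).
- apply (is_derive_plus (psum_deriv N a k)); [exact IH|].
  assert (Hpow := is_derive_pow (fun y => y) (N - k) x 1 (is_derive_id x)).
  replace (a N * (falling N k * INR (N - k)) * x ^ (N - S k)) with
    (a N * falling N k * (INR (N - k) * 1 * x ^ Nat.pred (N - k)))
    by (replace (Nat.pred (N - k)) with (N - S k)%nat by lia; ring).
  apply (is_derive_scal (fun y => y ^ (N - k))), Hpow.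
Qed.

Lemma psum_deriv_high N a k x : (N <= k)%nat -> psum_deriv N a k x = 0.
Proof.
induction N as [|N IH]; intro H; simpl; [reflexivity|].
rewrite IH, (falling_lt N k) by lia. ring.
Qed.

Lemma psum_deriv_at0 N a k : (k < N)%nat -> psum_deriv N a k 0 = a k * falling k k.
Proof.
induction N as [|N IH]; intro H; simpl; [lia|].
destruct (Nat.eq_dec k N) as [->|Hne].
- rewrite psum_deriv_high, Nat.sub_diag by lia. simpl; ring.
- rewrite IH, pow_i by lia. ring.
Qed.

Lemma Derive_n_algpoly_at0 n a k : (k <= n)%nat ->
  Derive_n (algpoly n a) k 0 = a k * falling k k.
Proof.
intro Hk. rewrite <- (psum_deriv_at0 (S n)) by lia.
apply (Derive_n_chain _ (psum_deriv (S n) a) k);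
  [|intros; apply is_derive_psum_deriv|lia].
intro x. rewrite psum_deriv_0. symmetry. apply algpoly_psum.
Qed.

Lemma RInt_taylor_monomial c a k x :
  RInt (fun t => c * (t - a) ^ k / INR (fact k)) a x
  = c * (x - a) ^ S k / INR (fact (S k)).
Proof.
apply is_RInt_unique.
assert (Hf : forall j, INR (fact j) <> 0) by (intro j; apply not_0_INR, fact_neq_0).
replace (c * (x - a) ^ S k / INR (fact (S k))) with
  (minus (c * (x - a) ^ S k / INR (fact (S k))) (c * (a - a) ^ S k / INR (fact (S k))))
  by (unfold minus, plus, opp; simpl; replace (a - a) with 0 by ring; unfold Rdiv; ring).
apply (is_RInt_derive (fun y => c * (y - a) ^ S k / INR (fact (S k)))).
- intros y _. auto_derive; [exact I|].
  change (match k with 0%nat => 1 | S _ => INR k + 1 end) with (INR (S k)).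
  change (fact k + k * fact k)%nat with (fact (S k)).
  rewrite fact_simpl, mult_INR. replace (y + - a) with (y - a) by ring.
  field. split; [apply Hf|apply not_0_INR; lia].
- intros y _. apply (ex_derive_continuous (fun t => c * (t - a) ^ k / INR (fact k))).
  auto_derive. exact I.
Qed.

Lemma ex_RInt_taylor_monomial c a k u v :
  ex_RInt (fun t => c * (t - a) ^ k / INR (fact k)) u v.
Proof.
apply (@ex_RInt_continuous R_CompleteNormedModule). intros y _.
apply (ex_derive_continuous (fun t => c * (t - a) ^ k / INR (fact k))).
auto_derive. exact I.
Qed.

Section IteratedPrimitive.

Variable h : R -> R.
Hypothesis h_cont : forall x, continuous h x.

Fixpoint prim (k : nat) : R -> R :=
  match k with O => h | S k' => fun x => RInt (prim k') 0 x end.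

Lemma prim_continuous k x : continuous (prim k) x.
Proof.
revert x; induction k as [|k IH]; intro x; [apply h_cont|].
apply (ex_derive_continuous (prim (S k))). exists (prim k x).
apply (is_derive_RInt (prim k) (prim (S k)) 0 x); [|apply IH].
apply filter_forall. intro b. apply (RInt_correct (prim k)).
apply (@ex_RInt_continuous R_CompleteNormedModule). intros; apply IH.
Qed.

Lemma ex_RInt_prim k a b : ex_RInt (prim k) a b.
Proof.
apply (@ex_RInt_continuous R_CompleteNormedModule). intros; apply prim_continuous.
Qed.

Lemma is_derive_prim k x : is_derive (prim (S k)) x (prim k x).
Proof.
apply (is_derive_RInt (prim k) (prim (S k)) 0 x); [|apply prim_continuous].
apply filter_forall. intro b. apply (RInt_correct (prim k)), ex_RInt_prim.
Qed.

Lemma prim_S_at0 k : prim (S k) 0 = 0.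
Proof. apply (@RInt_point R_CompleteNormedModule). Qed.

Lemma prim_opp (h_odd : forall x, h (- x) = - h x) k x :
  prim k (- x) = (-1) ^ S k * prim k x.
Proof.
revert x. induction k as [|k IH]; intro x; simpl.
- rewrite h_odd. ring.
- assert (H := RInt_comp_lin (V := R_CompleteNormedModule) (prim k) (-1) 0 0 x
    (ex_RInt_prim _ _ _)).
  replace (-1 * 0 + 0) with 0 in H by ring. replace (-1 * x + 0) with (- x) in H by ring.
  rewrite <- H, (RInt_ext _ (fun y => scal ((-1) ^ S (S k)) (prim k y))).
  + apply (RInt_scal (V := R_CompleteNormedModule)), ex_RInt_prim.
  + intros y _. replace (-1 * y + 0) with (- y) by ring. rewrite IH.
    unfold scal; simpl; unfold mult; simpl. ring.
Qed.

Lemma prim_nonneg (h_nonneg : forall x, 0 <= x -> 0 <= h x) k x : 0 <= x ->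
  0 <= prim k x.
Proof.
revert x. induction k as [|k IH]; intros x Hx; simpl; [apply h_nonneg, Hx|].
apply RInt_ge_0; [exact Hx|apply ex_RInt_prim|]. intros t Ht; apply IH; lra.
Qed.

Lemma prim_le c (h_le : forall x, 0 <= x -> h x <= c) k x : 0 <= x ->
  prim k x <= c * x ^ k / INR (fact k).
Proof.
revert x. induction k as [|k IH]; intros x Hx; simpl prim.
- simpl. replace (c * 1 / 1) with c by field. apply h_le, Hx.
- replace x with (x - 0) at 2 by ring. rewrite <- RInt_taylor_monomial.
  apply RInt_le; [exact Hx|apply ex_RInt_prim|apply ex_RInt_taylor_monomial|].
  intros t Ht. rewrite Rminus_0_r. apply IH; lra.
Qed.

Lemma prim_ge c d (h_nonneg : forall x, 0 <= x -> 0 <= h x)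
  (h_ge : forall x, d <= x -> c <= h x) (Hd : 0 <= d) k x : d <= x ->
  c * (x - d) ^ k / INR (fact k) <= prim k x.
Proof.
revert x. induction k as [|k IH]; intros x Hx; simpl prim.
- simpl. replace (c * 1 / 1) with c by field. apply h_ge, Hx.
- rewrite <- (RInt_Chasles (V := R_CompleteNormedModule) (prim k) 0 d x)
    by apply ex_RInt_prim.
  change (plus ?u ?v) with (u + v). rewrite <- RInt_taylor_monomial.
  assert (0 <= RInt (prim k) 0 d).
  { apply RInt_ge_0; [exact Hd|apply ex_RInt_prim|].
    intros t Ht. apply prim_nonneg; [exact h_nonneg|lra]. }
  assert (RInt (fun t => c * (t - d) ^ k / INR (fact k)) d x <= RInt (prim k) d x).
  { apply RInt_le; [exact Hx|apply ex_RInt_taylor_monomial|apply ex_RInt_prim|].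
    intros t Ht; apply IH; lra. }
  lra.
Qed.

End IteratedPrimitive.

(* [ramp d x] is [x / d] clamped to [[-1, 1]]. *)
Definition ramp (d x : R) : R := (Rabs (x + d) - Rabs (x - d)) / (2 * d).

Lemma ramp_continuous d x : continuous (ramp d) x.
Proof.
unfold ramp.
apply (continuous_mult (fun y => Rabs (y + d) - Rabs (y - d)) (fun _ => / (2 * d)));
  [|apply continuous_const].
apply (continuous_plus (fun y => Rabs (y + d)) (fun y => - Rabs (y - d))).
- apply continuous_Rabs_comp, (continuous_plus (fun y => y) (fun _ => d));
    [apply continuous_id|apply continuous_const].
- apply (continuous_opp (fun y => Rabs (y - d))), continuous_Rabs_comp.
  apply (continuous_plus (fun y => y) (fun _ => - d));
    [apply continuous_id|apply continuous_const].
Qed.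

Lemma ramp_opp d x : ramp d (- x) = - ramp d x.
Proof.
unfold ramp. replace (- x + d) with (- (x - d)) by ring.
replace (- x - d) with (- (x + d)) by ring. rewrite !Rabs_Ropp. unfold Rdiv; ring.
Qed.

Lemma Rabs_ramp_le d x : 0 < d -> Rabs (ramp d x) <= 1.
Proof.
intro Hd. unfold ramp. rewrite Rabs_div, (Rabs_pos_eq (2 * d)) by lra.
apply Rle_div_l; [lra|]. rewrite Rmult_1_l.
assert (H := Rabs_triang_inv2 (x + d) (x - d)).
replace (x + d - (x - d)) with (2 * d) in H by ring.
rewrite (Rabs_pos_eq (2 * d)) in H by lra. exact H.
Qed.

Lemma ramp_nonneg d x : 0 < d -> 0 <= x -> 0 <= ramp d x.
Proof.
intros Hd Hx. unfold ramp. apply Rdiv_le_0_compat; [|lra].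
rewrite (Rabs_pos_eq (x + d)) by lra. unfold Rabs; destruct Rcase_abs; lra.
Qed.

Lemma ramp_eq1 d x : 0 < d -> d <= x -> ramp d x = 1.
Proof.
intros Hd Hx. unfold ramp.
rewrite (Rabs_pos_eq (x + d)), (Rabs_pos_eq (x - d)) by lra. field. lra.
Qed.

Lemma supnorm_le g K : (forall x, -1 <= x <= 1 -> Rabs (g x) <= K) -> supnorm g <= K.
Proof.
intro H. unfold supnorm.
set (E := fun y => exists x, -1 <= x <= 1 /\ y = Rabs (g x)).
destruct (Lub_Rbar_correct E) as [Hub Hlub].
assert (HK : is_ub_Rbar E K) by (intros y [x [Hx ->]]; apply H, Hx).
assert (E0 : E (Rabs (g 0))) by (exists 0; split; [lra|reflexivity]).
specialize (Hlub K HK). specialize (Hub _ E0).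
destruct (Lub_Rbar E); simpl in *; easy.
Qed.

(* The bound [K] matters: for unbounded [g], [supnorm g] is the junk value [0]. *)
Lemma Rabs_le_supnorm g K : (forall x, -1 <= x <= 1 -> Rabs (g x) <= K) ->
  forall x, -1 <= x <= 1 -> Rabs (g x) <= supnorm g.
Proof.
intros H x Hx. unfold supnorm.
set (E := fun y => exists x, -1 <= x <= 1 /\ y = Rabs (g x)).
destruct (Lub_Rbar_correct E) as [Hub Hlub].
assert (HK : is_ub_Rbar E K) by (intros y [z [Hz ->]]; apply H, Hz).
specialize (Hlub K HK). specialize (Hub (Rabs (g x)) (ex_intro _ x (conj Hx eq_refl))).
destruct (Lub_Rbar E); simpl in *; easy.
Qed.

Definition node (j : nat) : R := / (INR j + 1).

Lemma node_inj i j : node i = node j -> i = j.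
Proof.
unfold node. intro H. apply INR_eq.
assert (INR i + 1 = INR j + 1) by (rewrite <- (Rinv_inv (INR i + 1)), H; apply Rinv_inv).
lra.
Qed.

Lemma node_range j : 0 < node j <= 1.
Proof.
unfold node. assert (0 <= INR j) by apply pos_INR. split.
- apply Rinv_0_lt_compat; lra.
- rewrite <- Rinv_1. apply Rinv_le_contravar; lra.
Qed.

Module Interpolation.
Import all_boot all_order all_algebra Rstruct.
Import Order.TTheory GRing.Theory Num.Theory.

Section HornerBounds.
Local Open Scope ring_scope.

Lemma psum_horner N b x : psum N b x = (\poly_(i < N) b i).[x].
Proof.
rewrite horner_poly; elim: N => [|N IH] /=; first by rewrite big_ord0.
by rewrite big_ord_recr /= IH RpowE.
Qed.

Lemma norm_exprB_le (s t : R) k : `|s| <= 1 -> `|t| <= 1 ->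
  `|s ^+ k - t ^+ k| <= k%:R * `|s - t|.
Proof.
move=> hs ht; elim: k => [|k IH]; first by rewrite !expr0 subrr normr0 mul0r.
have -> : s ^+ k.+1 - t ^+ k.+1 = s * (s ^+ k - t ^+ k) + t ^+ k * (s - t).
  by rewrite !exprS !mulrBr [t ^+ k * s]mulrC [t ^+ k * t]mulrC addrA subrK.
apply: le_trans (ler_normD _ _) _.
rewrite mulrSr mulrDl !normrM; apply: lerD.
  by rewrite -[X in _ <= X]mul1r; apply: ler_pM; rewrite ?normr_ge0.
apply: (ler_wpM2r (normr_ge0 _)).
by rewrite normrX; apply: exprn_ile1; rewrite ?normr_ge0.
Qed.

Lemma norm_horner_le (p : {poly R}) (s : R) : `|s| <= 1 ->
  `|p.[s]| <= \sum_(k < size p) `|p`_k|.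
Proof.
move=> hs; rewrite horner_coef; apply: le_trans (ler_norm_sum _ _ _) _.
apply: ler_sum => k _; rewrite normrM normrX -[X in _ <= X]mulr1.
by apply: (ler_wpM2l (normr_ge0 _)); apply: exprn_ile1; rewrite ?normr_ge0.
Qed.

Lemma horner_lipschitz (p : {poly R}) (s t : R) : `|s| <= 1 -> `|t| <= 1 ->
  `|p.[s] - p.[t]| <= (\sum_(k < size p) k%:R * `|p`_k|) * `|s - t|.
Proof.
move=> hs ht; rewrite !horner_coef -sumrB mulr_suml.
apply: le_trans (ler_norm_sum _ _ _) _; apply: ler_sum => k _.
rewrite -mulrBr normrM [_%:R * _]mulrC -mulrA.
by apply: (ler_wpM2l (normr_ge0 _)); apply: norm_exprB_le.
Qed.

End HornerBounds.

Lemma psum_bounded N b : exists M, forall x, -1 <= x <= 1 -> Rabs (psum N b x) <= M.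
Proof.
eexists => x /(Rabs_le x 1) /RleP hx; rewrite psum_horner; apply/RleP.
exact: norm_horner_le hx.
Qed.

Lemma psum_lipschitz_at_nodes (x : nat -> R) N : (forall i j, x i = x j -> i = j) ->
  exists C, 0 <= C /\ forall b B, (forall j, lt j N -> Rabs (psum N b (x j)) <= B) ->
  forall s t, -1 <= s <= 1 -> -1 <= t <= 1 ->
  Rabs (psum N b s - psum N b t) <= C * B * Rabs (s - t).
Proof.
move=> x_inj; case: N => [|N].
  exists 0; split; [lra|] => b B _ s t _ _ /=.
  rewrite Rminus_0_r Rabs_R0 !Rmult_0_l; lra.
pose l i := tnth (lagrange N.+1 x) i : {poly R}.
exists (\sum_(i < N.+1) \sum_(k < size (l i)) k%:R * `|(l i)`_k|)%R; split.
  by apply/RleP; apply: sumr_ge0 => i _; apply: sumr_ge0 => k _; rewrite mulr_ge0.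
move=> b B HB s t /(Rabs_le s 1) /RleP hs /(Rabs_le t 1) /RleP ht.
rewrite !psum_horner; set p := (\poly_(i < N.+1) b i)%R.
rewrite [p in (p.[s])%R](lagrange_gen (ltn0Sn N) x_inj (size_poly _ _)).
rewrite [p in (p.[t])%R](lagrange_gen (ltn0Sn N) x_inj (size_poly _ _)).
have normE y : Rabs y = `|y|%R by [].
apply/RleP; rewrite !RminusE !RmultE !normE !horner_sum -sumrB !mulr_suml.
apply: le_trans (ler_norm_sum _ _ _) _; apply: ler_sum => i _.
rewrite !hornerCM -mulrBr normrM [(_ * B)%R]mulrC -mulrA.
apply: ler_pM; rewrite ?normr_ge0 //.
  by move: (HB i (ssrnat.ltP (ltn_ord i))); rewrite psum_horner => /RleP.
exact: horner_lipschitz.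
Qed.

End Interpolation.

Lemma pow_opp_odd k x : Nat.Odd k -> (- x) ^ k = - x ^ k.
Proof.
intros [m ->]. replace (- x) with (-1 * x) by ring.
rewrite Rpow_mult_distr, Nat.add_1_r, pow_1_odd. ring.
Qed.

Lemma pow_le_one x k : 0 <= x <= 1 -> x ^ k <= 1.
Proof. intro Hx. rewrite <- (pow1 k). apply pow_incr, Hx. Qed.

Lemma node_bound (Q : R -> R) r B N j :
  (forall x, 0 < x <= 1 -> Rabs (x ^ r * Q x) <= B) -> (j < N)%nat ->
  Rabs (Q (node j)) <= B * INR N ^ r.
Proof.
intros HQ Hj. assert (Hn := node_range j). specialize (HQ _ Hn).
assert (Hinv : (INR j + 1) ^ r * node j ^ r = 1).
{ rewrite <- Rpow_mult_distr. unfold node. rewrite Rinv_r; [apply pow1|].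
  assert (0 <= INR j) by apply pos_INR. lra. }
assert (HjN : 0 <= (INR j + 1) ^ r <= INR N ^ r).
{ assert (0 <= INR j) by apply pos_INR.
  split; [apply pow_le; lra|]. apply pow_incr.
  rewrite <- S_INR. split; [apply pos_INR|apply le_INR; lia]. }
rewrite Rabs_mult, (Rabs_pos_eq (node j ^ r)) in HQ by (apply pow_le; lra).
replace (Rabs (Q (node j))) with ((INR j + 1) ^ r * (node j ^ r * Rabs (Q (node j))))
  by (rewrite <- Rmult_assoc, Hinv; ring).
assert (0 <= node j ^ r * Rabs (Q (node j)))
  by (apply Rmult_le_pos; [apply pow_le; lra|apply Rabs_pos]).
rewrite Rmult_comm. apply Rmult_le_compat; lra.
Qed.

Section Example.

Variables (r : nat) (s : R).
Hypotheses (r_ge4 : (4 <= r)%nat) (r_even : Nat.Even r) (s_pos : 0 < s).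

Definition height : R := 2 ^ r * INR (fact r) / s.
Definition clip (x : R) : R := height * ramp (s / 2) x.
Definition jet (x : R) : R := s ^ 2 * x ^ (r - 3) - x ^ (r - 1).
Definition jet_coef (j : nat) : R :=
  (if j =? r - 3 then s ^ 2 else 0) + (if j =? r - 1 then -1 else 0).
Definition f_example (x : R) : R := jet x + prim clip r x.

Lemma height_pos : 0 < height.
Proof.
unfold height. apply Rdiv_lt_0_compat; [|exact s_pos].
apply Rmult_lt_0_compat; [apply pow_lt; lra|apply lt_0_INR, lt_O_fact].
Qed.

Lemma clip_continuous x : continuous clip x.
Proof. apply (continuous_scal_r height (ramp (s / 2))), ramp_continuous. Qed.

Lemma clip_opp x : clip (- x) = - clip x.
Proof. unfold clip. rewrite ramp_opp. ring. Qed.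

Lemma clip_bounds x : 0 <= x -> 0 <= clip x <= height.
Proof.
intro Hx. assert (H0 := ramp_nonneg (s / 2) x ltac:(lra) Hx).
assert (H1 := Rle_trans _ _ _ (Rle_abs _) (Rabs_ramp_le (s / 2) x ltac:(lra))).
assert (Hh := height_pos). unfold clip. nra.
Qed.

Lemma pow_r_split y : y ^ r = y ^ (r - 3) * y ^ 3.
Proof. rewrite <- pow_add. f_equal. lia. Qed.

Lemma pow_pred_r_split y : y ^ (r - 1) = y ^ (r - 3) * y ^ 2.
Proof. rewrite <- pow_add. f_equal. lia. Qed.

Lemma psum_jet_coef x : psum r jet_coef x = jet x.
Proof. unfold jet_coef, jet. rewrite psum_plus, !psum_monomial by lia. ring. Qed.

Let f_deriv (k : nat) (x : R) : R := psum_deriv r jet_coef k x + prim clip (r - k) x.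

Lemma is_derive_f_deriv k x : (k < r)%nat ->
  is_derive (f_deriv k) x (f_deriv (S k) x).
Proof.
intro Hk. unfold f_deriv. replace (r - k)%nat with (S (r - S k)) by lia.
apply (is_derive_plus (psum_deriv r jet_coef k)).
- apply is_derive_psum_deriv.
- apply is_derive_prim, clip_continuous.
Qed.

Lemma f_deriv_0 x : f_deriv O x = f_example x.
Proof.
unfold f_deriv, f_example. rewrite psum_deriv_0, psum_jet_coef, Nat.sub_0_r. reflexivity.
Qed.

Lemma Derive_n_f_example k x : (k <= r)%nat -> Derive_n f_example k x = f_deriv k x.
Proof. apply (Derive_n_chain f_example f_deriv r f_deriv_0 is_derive_f_deriv). Qed.

Lemma Cr_f_example : Cr r f_example.
Proof.
apply (Cr_chain f_example f_deriv r f_deriv_0 is_derive_f_deriv). intro x.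
apply (continuous_ext clip); [|apply clip_continuous].
intro y. unfold f_deriv. rewrite psum_deriv_high, Nat.sub_diag by lia. simpl. ring.
Qed.

Lemma Derive_n_f_example_at0 k : (k < r)%nat ->
  Derive_n f_example k 0 = jet_coef k * falling k k.
Proof.
intro Hk. rewrite Derive_n_f_example by lia. unfold f_deriv.
replace (r - k)%nat with (S (r - S k)) by lia.
rewrite psum_deriv_at0, prim_S_at0 by lia. ring.
Qed.

Lemma supnorm_Derive_n_f_example : supnorm (Derive_n f_example r) <= height.
Proof.
apply supnorm_le. intros x _.
rewrite Derive_n_f_example by lia. unfold f_deriv, clip.
rewrite psum_deriv_high, Nat.sub_diag by lia. simpl prim.
rewrite Rplus_0_l, Rabs_mult, (Rabs_pos_eq height) by (left; apply height_pos).
assert (Hh := height_pos). assert (Hr := Rabs_ramp_le (s / 2) x ltac:(lra)). nra.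
Qed.

Lemma odd_r_sub k : Nat.Odd k -> (k <= r)%nat -> Nat.Odd (r - k).
Proof.
destruct r_even as [p Hp]. intros [q Hq] Hk. exists (p - q - 1)%nat. lia.
Qed.

Lemma jet_opp x : jet (- x) = - jet x.
Proof.
unfold jet.
rewrite !pow_opp_odd by (apply odd_r_sub; [apply Nat.odd_spec; reflexivity|lia]).
ring.
Qed.

Lemma prim_clip_opp x : prim clip r (- x) = - prim clip r x.
Proof.
rewrite (prim_opp clip clip_continuous clip_opp).
destruct r_even as [p ->]. rewrite pow_1_odd. ring.
Qed.

Lemma f_example_opp x : f_example (- x) = - f_example x.
Proof. unfold f_example. rewrite jet_opp, prim_clip_opp. ring. Qed.

Lemma prim_clip_nonneg x : 0 <= x -> 0 <= prim clip r x.
Proof.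
apply prim_nonneg; [apply clip_continuous|intros y Hy; apply clip_bounds, Hy].
Qed.

Lemma prim_clip_ge x : s <= x -> x ^ r / s <= prim clip r x.
Proof.
intro Hx.
assert (Hge : height * (x - s / 2) ^ r / INR (fact r) <= prim clip r x).
{ apply prim_ge; [apply clip_continuous|intros y Hy; apply clip_bounds, Hy| |lra|lra].
  intros y Hy. unfold clip. rewrite ramp_eq1 by lra. lra. }
assert (Hpow : (x / 2) ^ r <= (x - s / 2) ^ r) by (apply pow_incr; lra).
assert (E : height * (x / 2) ^ r / INR (fact r) = x ^ r / s).
{ unfold height, Rdiv. rewrite Rpow_mult_distr, pow_inv.
  field. split; [lra|split; [apply not_0_INR, fact_neq_0|apply pow_nonzero; lra]]. }
assert (Hh := height_pos). assert (0 < INR (fact r)) by apply lt_0_INR, lt_O_fact.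
rewrite <- E. apply Rle_trans with (2 := Hge). unfold Rdiv.
apply Rmult_le_compat_r; [left; apply Rinv_0_lt_compat; lra|].
apply Rmult_le_compat_l; lra.
Qed.

Lemma f_example_nonneg x : 0 <= x -> 0 <= f_example x.
Proof.
intro Hx. unfold f_example, jet. rewrite pow_pred_r_split.
assert (Hu : 0 <= x ^ (r - 3)) by (apply pow_le; lra).
destruct (Rle_or_lt x s) as [Hxs|Hxs].
- assert (H0 := prim_clip_nonneg x Hx).
  assert (0 <= s ^ 2 - x ^ 2) by (simpl; nra). nra.
- assert (H1 := prim_clip_ge x (Rlt_le _ _ Hxs)).
  rewrite pow_r_split in H1.
  assert (0 <= x ^ 2 * (x - s) / s) by (apply Rdiv_le_0_compat; [simpl; nra|lra]).
  assert (E : x ^ 3 / s = x ^ 2 + x ^ 2 * (x - s) / s) by (field; lra).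
  unfold Rdiv in H1. rewrite Rmult_assoc in H1. fold (x ^ 3 / s) in H1. rewrite E in H1.
  assert (0 <= s ^ 2) by (simpl; nra). nra.
Qed.

Lemma sign_change_f_example : sign_change_at0 f_example.
Proof.
split; [|intros x Hx; apply f_example_nonneg; lra].
intros x Hx. rewrite <- (Ropp_involutive x), f_example_opp.
assert (0 <= f_example (- x)) by (apply f_example_nonneg; lra). lra.
Qed.

Lemma Rabs_prim_clip_le x : -1 <= x <= 1 -> Rabs (prim clip r x) <= height.
Proof.
assert (Hpos : forall y, 0 <= y <= 1 -> Rabs (prim clip r y) <= height).
{ intros y Hy. rewrite Rabs_pos_eq by (apply prim_clip_nonneg; lra).
  apply Rle_trans with (height * y ^ r / INR (fact r)).
  - apply prim_le; [apply clip_continuous|intros z Hz; apply clip_bounds, Hz|lra].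
  - assert (Hh := height_pos).
    assert (1 <= INR (fact r)) by (apply (le_INR 1), lt_O_fact).
    assert (y ^ r <= 1) by (apply pow_le_one; lra).
    assert (0 <= y ^ r) by (apply pow_le; lra).
    apply Rle_div_l; [lra|nra]. }
intro Hx. destruct (Rle_or_lt 0 x); [apply Hpos; lra|].
rewrite <- (Ropp_involutive x), prim_clip_opp, Rabs_Ropp. apply Hpos; lra.
Qed.

Lemma jet_match n a : (r - 1 <= n)%nat ->
  (forall i, (i <= r - 1)%nat -> Derive_n (algpoly n a) i 0 = Derive_n f_example i 0) ->
  forall x, algpoly n a x = jet x + x ^ r * psum (S n - r) (fun i => a (i + r)%nat) x.
Proof.
intros Hn Hder x.
assert (Ha : forall j, (j < r)%nat -> a j = jet_coef j).
{ intros j Hj. specialize (Hder j ltac:(lia)).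
  rewrite Derive_n_algpoly_at0, Derive_n_f_example_at0 in Hder by lia.
  assert (Hf := falling_pos j j (le_n j)).
  apply (Rmult_eq_reg_r (falling j j)); lra. }
rewrite algpoly_psum. replace (S n) with (r + (S n - r))%nat at 1 by lia.
rewrite psum_split, (psum_ext r a jet_coef), psum_jet_coef by exact Ha. reflexivity.
Qed.

Lemma sign_change_slope (P Q : R -> R) : 2 * s <= 1 ->
  (forall x, P x = jet x + x ^ r * Q x) -> sign_change_at0 P ->
  3 <= 4 * s * (Q (2 * s) - Q (- (2 * s))).
Proof.
intros Hs1 HP [Hneg Hpos].
set (z := 2 * s). set (w := z ^ (r - 3)).
assert (Hw : 0 < w) by (apply pow_lt; unfold z; lra).
assert (Hz : forall y, jet y + y ^ r * Q y = y ^ (r - 3) * (s ^ 2 - y ^ 2 + y ^ 3 * Q y)).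
{ intro y. unfold jet.
  rewrite pow_r_split, pow_pred_r_split. ring. }
assert (H1 := Hpos z ltac:(unfold z; lra)). rewrite HP, Hz in H1. fold w in H1.
assert (H2 := Hneg (- z) ltac:(unfold z; lra)). rewrite HP, Hz in H2.
rewrite pow_opp_odd in H2 by (apply odd_r_sub; [apply Nat.odd_spec; reflexivity|lia]).
fold w in H2.
replace (w * (s ^ 2 - z ^ 2 + z ^ 3 * Q z)) with (w * s ^ 2 * (8 * s * Q z - 3))
  in H1 by (unfold z; ring).
replace (- w * (s ^ 2 - (- z) ^ 2 + (- z) ^ 3 * Q (- z)))
  with (w * s ^ 2 * (3 + 8 * s * Q (- z))) in H2 by (unfold z; ring).
assert (0 < w * s ^ 2) by (apply Rmult_lt_0_compat; [exact Hw|simpl; nra]).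
nra.
Qed.

Lemma remainder_bound (P Q : R -> R) A : 0 <= A ->
  (forall x, P x = jet x + x ^ r * Q x) ->
  (exists M, forall x, -1 <= x <= 1 -> Rabs (Q x) <= M) ->
  supnorm (fun x => f_example x - P x) <= A * supnorm (Derive_n f_example r) ->
  forall x, -1 <= x <= 1 -> Rabs (x ^ r * Q x) <= (A + 1) * height.
Proof.
intros HA HP [M HM] Hle x Hx.
assert (Hdiff : forall y, f_example y - P y = prim clip r y - y ^ r * Q y)
  by (intro y; rewrite HP; unfold f_example; ring).
assert (Hxr : forall y, -1 <= y <= 1 -> Rabs (y ^ r * Q y) <= M).
{ intros y Hy. rewrite Rabs_mult, <- RPow_abs.
  assert (Rabs y ^ r <= 1)
    by (apply pow_le_one; split; [apply Rabs_pos|apply Rabs_le; lra]).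
  assert (0 <= Rabs y ^ r) by (apply pow_le, Rabs_pos).
  assert (HQ := HM y Hy). assert (0 <= Rabs (Q y)) by apply Rabs_pos. nra. }
assert (Hsup : Rabs (f_example x - P x) <= A * height).
{ apply Rle_trans with (supnorm (fun y => f_example y - P y)).
  - apply (Rabs_le_supnorm (fun y => f_example y - P y) (height + M)); [|exact Hx].
    intros y Hy. rewrite Hdiff. unfold Rminus.
    eapply Rle_trans; [apply Rabs_triang|]. rewrite Rabs_Ropp.
    apply Rplus_le_compat; [apply Rabs_prim_clip_le|apply Hxr]; exact Hy.
  - eapply Rle_trans; [exact Hle|]. apply Rmult_le_compat_l; [exact HA|].
    apply supnorm_Derive_n_f_example. }
rewrite Hdiff in Hsup.
replace (x ^ r * Q x) with (prim clip r x - (prim clip r x - x ^ r * Q x)) by ring.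
eapply Rle_trans; [apply Rabs_triang|]. rewrite Rabs_Ropp.
assert (Hg := Rabs_prim_clip_le x Hx). lra.
Qed.

End Example.

Theorem lemma3p14 (r n : nat) (A : R) :
  (4 <= r)%nat -> Nat.Even r -> (r - 1 <= n)%nat -> 0 < A ->
  exists f : R -> R,
    Cr r f /\ sign_change_at0 f /\
    forall a : nat -> R,
      sign_change_at0 (algpoly n a) ->
      (forall i : nat, (i <= r - 1)%nat -> Derive_n (algpoly n a) i 0 = Derive_n f i 0) ->
      supnorm (fun x => f x - algpoly n a x) > A * supnorm (Derive_n f r).
Proof.
intros Hr Hev Hn HA.
set (N := (S n - r)%nat).
destruct (Interpolation.psum_lipschitz_at_nodes node N node_inj) as [C [HC Hlip]].
set (K := 4 * C * (A + 1) * INR N ^ r * 2 ^ r * INR (fact r)).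
assert (HK : 0 <= K).
{ unfold K. assert (0 <= INR N ^ r) by (apply pow_le, pos_INR).
  assert (0 < 2 ^ r) by (apply pow_lt; lra).
  assert (0 < INR (fact r)) by (apply lt_0_INR, lt_O_fact).
  repeat apply Rmult_le_pos; lra. }
set (s := / (2 * (K + 1))).
assert (Hs : 0 < s) by (apply Rinv_0_lt_compat; lra).
assert (Hs1 : 2 * s * (K + 1) = 1) by (unfold s; field; lra).
assert (Hs2 : 2 * s <= 1) by nra.
exists (f_example r s).
split; [|split]; [apply Cr_f_example|apply sign_change_f_example|]; auto.
intros a Hsign Hder.
set (Q := psum N (fun i => a (i + r)%nat)).
assert (HP := jet_match r s Hr n a Hn Hder).
apply Rnot_le_lt. intro Hle.
assert (HxQ := remainder_bound r s Hr Hev Hs (algpoly n a) Q A (Rlt_le _ _ HA) HP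
  (Interpolation.psum_bounded N _) Hle).
assert (Hslope := sign_change_slope r s Hr Hev Hs (algpoly n a) Q Hs2 HP Hsign).
specialize (Hlip _ _ (fun j Hj => node_bound Q r _ N j (fun x Hx => HxQ x ltac:(lra)) Hj)
  (2 * s) (- (2 * s)) ltac:(lra) ltac:(lra)).
replace (C * ((A + 1) * height r s * INR N ^ r) * Rabs (2 * s - - (2 * s))) with K
  in Hlip by (unfold height, K; rewrite Rabs_pos_eq by lra; field; lra).
assert (Hd := Rle_trans _ _ _ (Rle_abs _) Hlip). fold Q in Hd.
assert (4 * s * (Q (2 * s) - Q (- (2 * s))) <= 4 * s * K)
  by (apply Rmult_le_compat_l; lra).
lra.
Qed.
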